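(* Let $D$ be a friendship digraph of order $n$. Then for each vertex $v\in V(D)$: (a) $d^+(v)=d^-(v)$; and (b) $\sum_{u\in N^+(v)}\bigl(d^-(u)-1\bigr)=n-1$.
   Context: All digraphs are finite and have neither loops nor parallel arcs (a pair of opposite arcs $(u,v)$ and $(v,u)$ is allowed). $N^+(v)$, $N^-(v)$ are the out- and in-neighborhoods of $v$, and $d^+(v)=|N^+(v)|$, $d^-(v)=|N^-(v)|$. A friendship digraph is a nontrivial digraph (at least two vertices) in which any two distinct vertices have exactly one common out-neighbor. *)

From mathcomp Require Import all_boot.
Set Implicit Arguments. Unset Strict Implicit. Unset Printing Implicit Defensive.

(* Parallel arcs are excluded automatically (a relation); opposite arcs allowed. *)
Definition loopless (T : finType) (e : rel T) : Prop := forall v, ~~ e v v.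

Definition outN (T : finType) (e : rel T) (v : T) : {set T} := [set u | e v u].
Definition inN (T : finType) (e : rel T) (v : T) : {set T} := [set u | e u v].
Definition outdeg (T : finType) (e : rel T) (v : T) : nat := #|outN e v|.
Definition indeg (T : finType) (e : rel T) (v : T) : nat := #|inN e v|.

Definition friendship_digraph (T : finType) (e : rel T) : Prop :=
  [/\ 2 <= #|T|, loopless e &
      forall x y : T, x != y -> #|outN e x :&: outN e y| = 1].

From mathcomp Require Import all_boot.
Set Implicit Arguments.
Unset Strict Implicit.
Unset Printing Implicit Defensive.

(* For an in-neighbour x of v, let f x be the common out-neighbour of x and v.
   If f x = f y = u for distinct x, y, then both u and v are common
   out-neighbours of x and y, and u <> v since v -> u; so f injects N^-(v)
   into N^+(v).  As in- and out-degrees have the same sum, d^-(v) <= d^+(v)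
   forces equality.  For (b), count the arcs x -> u with u in N^+(v) and
   x <> v: each u contributes d^-(u) - 1 of them, each x <> v exactly one. *)

Lemma sum_card_rel (I J : finType) (A : {pred I}) (B : {pred J}) (r : I -> J -> bool) :
  \sum_(i in A) #|[set j in B | r i j]| = \sum_(j in B) #|[set i in A | r i j]|.
Proof.
under eq_bigr do rewrite -sum1dep_card.
under [RHS]eq_bigr do rewrite -sum1dep_card.
rewrite (exchange_big_dep [in B]) => [|i j _ /andP[] //].
by apply: eq_bigr => j Bj; apply: eq_bigl => i; rewrite Bj.
Qed.

Lemma sum_outdeg_indeg (T : finType) (e : rel T) : \sum_v outdeg e v = \sum_v indeg e v.
Proof.
have := sum_card_rel predT predT e.
by congr (_ = _); apply: eq_big => // v _; apply: eq_card => u; rewrite !inE.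
Qed.

Lemma loopless_arc_neq (T : finType) (e : rel T) x y : loopless e -> e x y -> x != y.
Proof. by move=> loop_free exy; apply: contraTneq exy => ->. Qed.

Section FriendshipDigraph.

Variables (T : finType) (e : rel T).
Hypothesis friend_e : friendship_digraph e.

Lemma common_out_exists x y : x != y -> exists u, u \in outN e x :&: outN e y.
Proof. by case: friend_e => _ _ one xy; apply/card_gt0P; rewrite one. Qed.

Lemma common_out_uniq x y u w : x != y ->
  u \in outN e x :&: outN e y -> w \in outN e x :&: outN e y -> u = w.
Proof.
case: friend_e => _ _ one xy.
have /cards1P[c ->] : #|outN e x :&: outN e y| == 1 by rewrite one.
by rewrite !in_set1 => /eqP-> /eqP->.
Qed.

Lemma indeg_le_outdeg v : indeg e v <= outdeg e v.
Proof.
have [_ loop_free _] := friend_e.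
have /fin_all_exists[f f_common] :
    forall x, exists u, x \in inN e v -> u \in outN e x :&: outN e v.
  move=> x; case: (boolP (x \in inN e v)) => [xv | _]; last by exists v.
  have exv : e x v by rewrite inE in xv.
  by have [u common_u] := common_out_exists (loopless_arc_neq loop_free exv); exists u.
have f_inj : {in inN e v &, injective f}.
  move=> x y xv yv fxy; apply: contraTeq isT => xy.
  have /setIP[/[!inE] exu evu] := f_common x xv.
  have /setIP[/[!inE] eyu _] := f_common y yv.
  have u_common : f x \in outN e x :&: outN e y by rewrite !inE exu fxy eyu.
  have v_common : v \in outN e x :&: outN e y by move: xv yv; rewrite !inE => -> ->.
  by have := loopless_arc_neq loop_free evu; rewrite (common_out_uniq xy u_common v_common) eqxx.
rewrite /indeg -(card_in_imset f_inj); apply/subset_leq_card/subsetP => _ /imsetP[x xv ->].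
by have /setIP[] := f_common x xv.
Qed.

Lemma outdeg_eq_indeg v : outdeg e v = indeg e v.
Proof.
have := leqif_sum (fun u (_ : true) => leqif_eq (indeg_le_outdeg u)).
by rewrite sum_outdeg_indeg => -[_]; rewrite eqxx => /esym/forallP/(_ v)/eqP.
Qed.

Lemma sum_indeg_pred_outN v : \sum_(u in outN e v) (indeg e u - 1) = #|T| - 1.
Proof.
case: friend_e => _ _ one.
transitivity (\sum_(u in outN e v) #|[set x in predC1 v | e x u]|).
  apply: eq_bigr => u evu; rewrite /indeg (cardsD1 v) [v \in _]inE -[e v u]inE evu.
  by rewrite add1n subn1; apply: eq_card => x; rewrite !inE.
rewrite sum_card_rel subn1 -(cardC1 v) -sum1_card; apply: eq_bigr => x xv.
by rewrite -(one x v xv); apply: eq_card => u; rewrite !inE andbC.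
Qed.

End FriendshipDigraph.

Theorem proposition2p2 (T : finType) (e : rel T) :
  friendship_digraph e ->
  forall v : T,
    outdeg e v = indeg e v /\
    \sum_(u in outN e v) (indeg e u - 1) = #|T| - 1.
Proof.
by move=> friend_e v; split; [apply: outdeg_eq_indeg | apply: sum_indeg_pred_outN].
Qed.
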